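(* Let $\beta_1>0$, $\beta_2>0$ and $\beta_3\ge 0$ be real constants, and consider the linear system of partial differential equations for unknowns $p(x,t)$, $u(x,t)$, $x\in\mathbb{R}$, $t\ge 0$: \[ p_t + \beta_1 u_x - \beta_2\, \partial_t^3 p + \beta_3\, \partial_t^5 p = 0, \qquad u_t + p_x = 0 . \] Call a pair $(k,\omega)\in\mathbb{R}\times\mathbb{C}$ admissible if there exist constants $(\hat p,\hat u)\in\mathbb{C}^2\setminus\{(0,0)\}$ such that $p=\hat p\,e^{i(kx-\omega t)}$, $u=\hat u\,e^{i(kx-\omega t)}$ solves the system; equivalently, $\omega^2+\beta_2\omega^4+\beta_3\omega^6-\beta_1k^2=0$. Then: (i) for every $k\in\mathbb{R}$ there exists $\omega\in\mathbb{C}$ with $\operatorname{Im}\omega>0$ such that $(k,\omega)$ is admissible, i.e.\ the system is linearly unstable at every wavenumber (the corresponding plane wave grows exponentially in time); (ii) such $\omega=\omega(k)$ can be chosen so that $\operatorname{Im}\omega(k)\to+\infty$ as $|k|\to\infty$, so the initial value problem for the system is ill-posed.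
   Context: A plane wave $\hat p\,e^{i(kx-\omega t)}$ with $\operatorname{Im}\omega>0$ grows like $e^{(\operatorname{Im}\omega) t}$; unbounded growth rates as $|k|\to\infty$ mean the initial value problem is not well-posed in the sense of Hadamard. The case $\beta_3=0$ is included. *)

From mathcomp Require Import all_boot all_order all_algebra.
From mathcomp Require Import reals.
From mathcomp.real_closed Require Import complex.
Set Implicit Arguments. Unset Strict Implicit. Unset Printing Implicit Defensive.
Import Order.TTheory GRing.Theory Num.Theory.
Local Open Scope ring_scope.

(* Substituting p = ph e^{i(kx - w t)}, u = uh e^{i(kx - w t)} into
     p_t + b1 u_x - b2 d_t^3 p + b3 d_t^5 p = 0,   u_t + p_x = 0
   each derivative d_t acts as multiplication by (-i w) and d_x as (i k);
   after cancelling the nonvanishing common factor e^{i(kx - w t)} one gets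
   the following linear system for the amplitudes (ph, uh). *)
Definition plane_wave_solves (R : realType) (b1 b2 b3 k : R) (w ph uh : R[i]) : Prop :=
  let dt := - ('i)%C * w in
  let dx := ('i)%C * (k%:C)%C in
  dt * ph + (b1%:C)%C * (dx * uh) - (b2%:C)%C * (dt ^+ 3 * ph) + (b3%:C)%C * (dt ^+ 5 * ph) = 0
  /\ dt * uh + dx * ph = 0.

Definition admissible (R : realType) (b1 b2 b3 k : R) (w : R[i]) : Prop :=
  exists ph uh : R[i], (ph, uh) != (0, 0) /\ plane_wave_solves b1 b2 b3 k w ph uh.

From mathcomp Require Import all_boot all_order all_algebra.
From mathcomp Require Import reals boolp.
From mathcomp.real_closed Require Import complex.
From mathcomp Require Import ring lra.
Set Implicit Arguments. Unset Strict Implicit. Unset Printing Implicit Defensive.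
Import Order.TTheory GRing.Theory Num.Theory.
Local Open Scope ring_scope.
Local Open Scope complex_scope.

(* Writing z = w^2, the dispersion relation reads f(z) = b1 k^2 with
   f(z) = z + b2 z^2 + b3 z^3.  Since f is increasing on [0, oo), it has a real
   root x >= 0 there, and x -> oo as |k| -> oo.  Dividing f(z) - f(x) by z - x
   leaves b3 z^2 + (b2 + b3 x) z + (1 + b2 x + b3 x^2), which has a root with
   Re z < -x/2: the quadratic formula with the square root of nonnegative real
   part when b3 > 0, a real negative root when b3 = 0.  The square root w of z
   in the upper half plane then satisfies (Im w)^2 >= -Re z > x/2, so Im w > 0
   and Im w -> oo. *)

Definition dispersion {V : pzRingType} (b2 b3 z : V) : V :=
  z + b2 * z ^+ 2 + b3 * z ^+ 3.

Lemma dispersionB (V : comPzRingType) (b2 b3 z x : V) :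
  dispersion b2 b3 z - dispersion b2 b3 x
  = (z - x) * (b3 * z ^+ 2 + (b2 + b3 * x) * z + (1 + b2 * x + b3 * x ^+ 2)).
Proof. by rewrite /dispersion; ring. Qed.

Lemma ler_dispersion (R : realDomainType) (b2 b3 x y : R) :
  0 <= b2 -> 0 <= b3 -> 0 <= x -> x <= y ->
  dispersion b2 b3 x <= dispersion b2 b3 y.
Proof.
move=> b2_ge0 b3_ge0 x_ge0 le_xy; have y_ge0 := le_trans x_ge0 le_xy.
have le_X n : x ^+ n <= y ^+ n by rewrite lerXn2r ?nnegrE.
by rewrite !lerD ?ler_wpM2l ?le_X.
Qed.

Section RealClosed.

Variable R : rcfType.
Implicit Types (a b c x : R) (z : R[i]).

Lemma dispersion_real (b2 b3 x : R) :
  (dispersion b2 b3 x)%:C = dispersion b2%:C b3%:C x%:C.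
Proof. by rewrite /dispersion !rmorphD (rmorphM _ b2) (rmorphM _ b3) !rmorphXn. Qed.

Lemma dispersion_real_root (b2 b3 c : R) : 0 <= b2 -> 0 <= b3 -> 0 <= c ->
  exists2 x, 0 <= x & dispersion b2 b3 x = c.
Proof.
move=> b2_ge0 b3_ge0 c_ge0.
pose p : {poly R} := 'X + b2%:P * 'X^2 + b3%:P * 'X^3 - c%:P.
have p_eval x : p.[x] = dispersion b2 b3 x - c.
  by rewrite /p !(hornerD, hornerN, hornerCM, hornerXn, hornerX, hornerC).
have p_sign : p.[0] <= 0 <= p.[c].
  have -> : p.[0] = - c by rewrite p_eval /dispersion; ring.
  have -> : p.[c] = b2 * c ^+ 2 + b3 * c ^+ 3 by rewrite p_eval /dispersion; ring.
  by rewrite oppr_le0 c_ge0 addr_ge0 // mulr_ge0 // exprn_ge0.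
have [x /andP[x_ge0 _] /rootP px0] := poly_ivt c_ge0 p_sign.
by exists x => //; apply/eqP; rewrite -subr_eq0 -p_eval px0.
Qed.

Lemma Re_sqrtc_ge0 z : 0 <= complex.Re (sqrtc z).
Proof. by case: z => a b /=; apply: sqrtr_ge0. Qed.

Lemma quadratic_root_Re_le a b c : 0 < a ->
  exists z, a%:C * z ^+ 2 + b%:C * z + c%:C = 0 /\ complex.Re z <= - b / (2 * a).
Proof.
move=> a_gt0.
have := sqr_sqrtc (b ^+ 2 - 4 * a * c)%:C; have := Re_sqrtc_ge0 (b ^+ 2 - 4 * a * c)%:C.
case: sqrtc => s t /= s_ge0 /eqP; rewrite expr2 eq_complex /= => /andP[/eqP Re_sq /eqP Im_sq].
have a_neq0 : a != 0 by rewrite gt_eqF.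
exists ((- b - s) / (2 * a) +i* (- t / (2 * a))); split; last first.
  by rewrite /= ler_pM2r ?invr_gt0 ?mulr_gt0 // gerBl.
rewrite expr2; apply/eqP; rewrite eq_complex /=; apply/andP; split; apply/eqP.
  transitivity ((s * s - t * t - (b ^+ 2 - 4 * a * c)) / (4 * a)); first by field.
  by rewrite Re_sq subrr mul0r.
transitivity ((s * t + t * s) / (4 * a)); first by field.
by rewrite Im_sq mul0r.
Qed.

Lemma dispersion_left_root (b2 b3 x : R) : 0 < b2 -> 0 <= b3 -> 0 <= x ->
  exists z, dispersion b2%:C b3%:C z = (dispersion b2 b3 x)%:C
            /\ 2 * complex.Re z + x < 0.
Proof.
move=> b2_gt0 b3_ge0 x_ge0.
suff [z z_root Re_z] : exists2 z,
    b3%:C * z ^+ 2 + (b2 + b3 * x)%:C * z + (1 + b2 * x + b3 * x ^+ 2)%:C = 0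
    & 2 * complex.Re z + x < 0.
  exists z; split => //; apply/eqP.
  rewrite dispersion_real -subr_eq0 dispersionB.
  rewrite !(rmorphD, rmorphXn, rmorphM, rmorph1) in z_root.
  by rewrite z_root mulr0.
have [b3_eq0 | b3_neq0] := eqVneq b3 0.
  exists (- (1 + b2 * x) / b2 +i* 0).
    rewrite b3_eq0 expr2; apply/eqP; rewrite eq_complex /=.
    by apply/andP; split; apply/eqP; field; rewrite gt_eqF.
  have -> : 2 * (- (1 + b2 * x) / b2) + x = - (2 / b2 + x) by field; rewrite gt_eqF.
  by rewrite oppr_lt0 ltr_pwDl ?divr_gt0.
have b3_gt0 : 0 < b3 by rewrite lt_def b3_neq0.
have [z [z_root Re_z]] :=
  quadratic_root_Re_le (b2 + b3 * x) (1 + b2 * x + b3 * x ^+ 2) b3_gt0.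
exists z => //.
have b2_div_b3_gt0 : 0 < b2 / b3 by rewrite divr_gt0.
suff : - (b2 + b3 * x) / (2 * b3) = - (b2 / b3 + x) / 2 by lra.
by field; rewrite gt_eqF.
Qed.

Lemma sqrt_upper_half_plane z : complex.Re z < 0 ->
  exists w, w ^+ 2 = z /\ 0 < complex.Im w /\ - complex.Re z <= complex.Im w ^+ 2.
Proof.
move=> Re_z_lt0.
have Im_sq_ge w : w ^+ 2 = z -> - complex.Re z <= complex.Im w ^+ 2.
  by move<-; case: w => a b; rewrite !expr2 /=; nra.
have Im_neq0 w : w ^+ 2 = z -> complex.Im w != 0.
  move=> /Im_sq_ge Im_ge; apply: contraTneq Im_ge => ->.
  by rewrite expr2 mulr0 -ltNge oppr_gt0.
set s := sqrtc z; have s_sq : s ^+ 2 = z by apply: sqr_sqrtc.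
have sN_sq : (- s) ^+ 2 = z by rewrite sqrrN.
have [Im_s_gt0 | Im_s_le0] := ltP 0 (complex.Im s).
  by exists s; split=> //; split; last exact: Im_sq_ge.
exists (- s); split=> //; split; last exact: Im_sq_ge.
by rewrite raddfN oppr_gt0 lt_neqAle (Im_neq0 _ s_sq).
Qed.

Lemma unbounded_of_dispersion_ge (b1 b2 b3 : R) :
  0 < b1 -> 0 <= b2 -> 0 <= b3 -> forall M, exists K, forall k y,
  0 <= y -> K < `|k| -> b1 * k ^+ 2 <= dispersion b2 b3 (2 * y ^+ 2) -> M < y.
Proof.
move=> b1_gt0 b2_ge0 b3_ge0 M.
exists (Num.sqrt (dispersion b2 b3 (2 * M ^+ 2) / b1)) => k y y_ge0 k_large k_bound.
rewrite ltNge; apply/negP => le_yM.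
have le_y2M2 : 2 * y ^+ 2 <= 2 * M ^+ 2.
  by rewrite ler_pM2l // lerXn2r ?nnegrE // (le_trans y_ge0).
have : k ^+ 2 <= dispersion b2 b3 (2 * M ^+ 2) / b1.
  rewrite ler_pdivlMr // mulrC (le_trans k_bound) // ler_dispersion //.
  by rewrite mulr_ge0 // sqr_ge0.
move=> /ler_wsqrtr; rewrite sqrtr_sqr => /(lt_le_trans k_large).
by rewrite ltxx.
Qed.

End RealClosed.

Section Reals.

Variable R : realType.

Lemma admissible_of_dispersion (b1 b2 b3 k : R) (w : R[i]) : w != 0 ->
  dispersion b2%:C b3%:C (w ^+ 2) = (b1 * k ^+ 2)%:C ->
  admissible b1 b2 b3 k w.
Proof.
move=> w_neq0 w_disp; exists w, k%:C; split; first by rewrite xpair_eqE negb_and w_neq0.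
split; last by ring.
have iw_sq : (- 'i%C * w) ^+ 2 = - w ^+ 2 by rewrite exprMn sqrrN sqr_i mulN1r.
have -> : (- 'i%C * w) ^+ 3 = - 'i%C * w * (- 'i%C * w) ^+ 2 by rewrite exprS.
have -> : (- 'i%C * w) ^+ 5 = - 'i%C * w * ((- 'i%C * w) ^+ 2) ^+ 2 by rewrite exprS -exprM.
rewrite iw_sq.
transitivity (- 'i%C * (dispersion b2%:C b3%:C (w ^+ 2) - (b1 * k ^+ 2)%:C)).
  by rewrite /dispersion rmorphM rmorphXn; ring.
by rewrite w_disp subrr mulr0.
Qed.

Lemma admissible_growing_mode (b1 b2 b3 : R) : 0 < b1 -> 0 < b2 -> 0 <= b3 ->
  forall k, exists w : R[i], (0 < complex.Im w /\ admissible b1 b2 b3 k w)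
    /\ b1 * k ^+ 2 <= dispersion b2 b3 (2 * complex.Im w ^+ 2).
Proof.
move=> b1_gt0 b2_gt0 b3_ge0 k.
have [x x_ge0 x_root] :=
  dispersion_real_root (ltW b2_gt0) b3_ge0 (mulr_ge0 (ltW b1_gt0) (sqr_ge0 k)).
have [z [z_root Re_z]] := dispersion_left_root b2_gt0 b3_ge0 x_ge0.
have [|w [w_sq [Im_w_gt0 Im_w_ge]]] := @sqrt_upper_half_plane _ z; first lra.
have w_neq0 : w != 0 by apply: contraTneq Im_w_gt0 => ->; rewrite ltxx.
exists w; split; first split => //.
  by apply: admissible_of_dispersion => //; rewrite w_sq z_root x_root.
rewrite -x_root ler_dispersion ?(ltW b2_gt0) //; lra.
Qed.

End Reals.

Theorem mainTheorem1 (R : realType) (b1 b2 b3 : R)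
  (hb1 : 0 < b1) (hb2 : 0 < b2) (hb3 : 0 <= b3) :
  (forall k : R, exists w : R[i], 0 < complex.Im w /\ admissible b1 b2 b3 k w)
  /\
  (exists w : R -> R[i],
     (forall k : R, 0 < complex.Im (w k) /\ admissible b1 b2 b3 k (w k)) /\
     (forall M : R, exists K : R, forall k : R, K < `|k| -> M < complex.Im (w k))).
Proof.
have growth := admissible_growing_mode hb1 hb2 hb3.
split=> [k | ].
  by have [w [unstable _]] := growth k; exists w.
have [w w_growth] := choice growth.
exists w; split=> [k | M]; first by case: (w_growth k).
have [K K_large] := unbounded_of_dispersion_ge hb1 (ltW hb2) hb3 M.
exists K => k k_large; have [[Im_w_gt0 _] w_bound] := w_growth k.
exact: K_large (ltW Im_w_gt0) k_large w_bound.
Qed.
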